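(* For all positive integers $n,p$, $$\beta(n,p,2)=\beta^*(n,p,2)=\Theta\left(\min\left\{np^{1/2},\,n^{2/3}p\right\}+n+p\right),$$ where the hidden constants are absolute.
   Context: A path system is a pair $S=(V,\Pi)$ where $V$ is a finite ground set of nodes and $\Pi$ is a multiset of finite sequences of nodes (called paths), each path containing each node at most once. The size of $S$ is $\|S\|=\sum_{\pi\in\Pi}|\pi|$, where $|\pi|$ is the number of nodes of $\pi$. For a path $\pi$, write $x<_\pi y$ if $x,y\in\pi$ and $x$ strictly precedes $y$ in $\pi$. A $b$-bridge in $S$ consists of $b$ distinct nodes $v_1,\dots,v_b$ and $b$ distinct paths $\pi_1,\dots,\pi_b\in\Pi$ such that $v_i<_{\pi_i}v_{i+1}$ for all $1\le i\le b-1$ and $v_1<_{\pi_b}v_b$; $\pi_b$ is called the river and $\pi_1,\dots,\pi_{b-1}$ the arcs. The bridge girth of $S$ is the least $b$ such that $S$ has a $b$-bridge ($\infty$ if none). $\beta(n,p,k)$ denotes the maximum possible size of a path system with $n$ nodes, $p$ paths and bridge girth $>k$ ($k=\infty$ allowed). An ordered path system is a path system together with a total order on its paths; an ordered bridge is a bridge whose river comes after all its arcs in this order; the ordered bridge girth is the least $b$ such that there is an ordered $b$-bridge. $\beta^*(n,p,k)$ denotes the maximum possible size of an ordered path system with $n$ nodes, $p$ paths and ordered bridge girth $>k$. *)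

From mathcomp Require Import all_boot fingroup perm.
From Stdlib Require Import ClassicalEpsilon.
Set Implicit Arguments. Unset Strict Implicit. Unset Printing Implicit Defensive.

(* A path system on the ground set 'I_n with p paths (a multiset of paths is
   modelled as a 'I_p-indexed family): P i is the i-th path. *)
Definition path_system (n p : nat) (P : 'I_p -> seq 'I_n) : Prop :=
  forall i, uniq (P i).

Definition psize (n p : nat) (P : 'I_p -> seq 'I_n) : nat :=
  \sum_(i < p) size (P i).

Definition precedes (T : eqType) (s : seq T) (x y : T) : bool :=
  [&& x \in s, y \in s & index x s < index y s].

Definition is_bridge (n p : nat) (P : 'I_p -> seq 'I_n) (b : nat)
  (v : nat -> 'I_n) (r : nat -> 'I_p) : Prop :=
  [/\ 0 < b,
      (forall i j, i < b -> j < b -> v i = v j -> i = j),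
      (forall i j, i < b -> j < b -> r i = r j -> i = j),
      (forall i, i.+1 < b -> precedes (P (r i)) (v i) (v i.+1)) &
      precedes (P (r b.-1)) (v 0) (v b.-1)].

Definition bridge_girth_gt (n p : nat) (P : 'I_p -> seq 'I_n) (k : nat) : Prop :=
  forall b, b <= k -> ~ exists v r, is_bridge P b v r.

(* Ordered path systems: the total order on paths is given by a permutation
   sigma (path i comes before path j iff sigma i < sigma j). *)
Definition is_ordered_bridge (n p : nat) (P : 'I_p -> seq 'I_n) (sigma : {perm 'I_p})
  (b : nat) (v : nat -> 'I_n) (r : nat -> 'I_p) : Prop :=
  is_bridge P b v r /\ (forall i, i < b.-1 -> (sigma (r i) < sigma (r b.-1))%N).

Definition ordered_bridge_girth_gt (n p : nat) (P : 'I_p -> seq 'I_n)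
  (sigma : {perm 'I_p}) (k : nat) : Prop :=
  forall b, b <= k -> ~ exists v r, is_ordered_bridge P sigma b v r.

Definition achievable (n p k s : nat) : Prop :=
  exists P : 'I_p -> seq 'I_n,
    [/\ path_system P, bridge_girth_gt P k & psize P = s].

Definition achievable_ord (n p k s : nat) : Prop :=
  exists (P : 'I_p -> seq 'I_n) (sigma : {perm 'I_p}),
    [/\ path_system P, ordered_bridge_girth_gt P sigma k & psize P = s].

Definition decb (Q : Prop) : bool :=
  if excluded_middle_informative Q then true else false.

Lemma decbP (Q : Prop) : decb Q <-> Q.
Proof. by rewrite /decb; case: excluded_middle_informative. Qed.

Lemma psize_bound (n p : nat) (P : 'I_p -> seq 'I_n) :
  path_system P -> psize P <= p * n.
Proof.
move=> HP; rewrite /psize.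
apply: (@leq_trans (\sum_(i < p) n)); last by rewrite sum_nat_const card_ord.
apply: leq_sum => i _.
by rewrite -(card_uniqP (HP i)) -[X in _ <= X](card_ord n) max_card.
Qed.

Lemma empty_no_bridge (n p k : nat) :
  bridge_girth_gt (fun _ : 'I_p => [::] : seq 'I_n) k.
Proof. by move=> b _ [v [r [_ _ _ _]]]. Qed.

Lemma achievable_ex (n p k : nat) : exists s, decb (achievable n p k s).
Proof.
exists 0; apply/decbP; exists (fun _ => [::]); split => //.
- exact: empty_no_bridge.
- by rewrite /psize big1.
Qed.

Lemma achievable_ub (n p k : nat) : forall s, decb (achievable n p k s) -> s <= p * n.
Proof. by move=> s /decbP [P [HP _ <-]]; exact: psize_bound. Qed.

Lemma achievable_ord_ex (n p k : nat) : exists s, decb (achievable_ord n p k s).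
Proof.
exists 0; apply/decbP; exists (fun _ => [::]), 1%g; split => //.
- by move=> b _ [v [r [[_ _ _ _ H] _]]].
- by rewrite /psize big1.
Qed.

Lemma achievable_ord_ub (n p k : nat) :
  forall s, decb (achievable_ord n p k s) -> s <= p * n.
Proof. by move=> s /decbP [P [sigma [HP _ <-]]]; exact: psize_bound. Qed.

Definition beta (n p k : nat) : nat :=
  ex_maxn (achievable_ex n p k) (@achievable_ub n p k).

Definition beta_star (n p k : nat) : nat :=
  ex_maxn (achievable_ord_ex n p k) (@achievable_ord_ub n p k).

(* Bridge girth > 2 says that no ordered pair x <_pi y of nodes lies on two paths.  This
   condition is symmetric in the two paths, so ordering the paths changes nothing and
   beta(n,p,2) = beta^*(n,p,2).

   Upper bound: two paths through distinct nodes x, y must order them differently, so at most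
   two paths contain both, and three distinct paths share at most one node.  Double counting
   pairs of nodes on a path and triples of paths through a node, together with Cauchy-Schwarz
   and the power-mean inequality, gives ||S||^2 <= p (2 n^2 + ||S||) and
   (||S|| - 2 n)^3 <= n^2 p^3.

   Lower bound: one path through all nodes, or p one-node paths, give n and p.  Otherwise take
   a field F_q of characteristic 2 with q of order max(p^(1/2), n^(1/3)); both constructions
   below have size of order n p / q, which is of order min(n p^(1/2), n^(2/3) p).  If n <= 8 p,
   use the lines y = m x + c, two of which meet at most once.  If n > 8 p, let the path
   indexed by (a, b) visit the nodes (g^k (a - r)^2, r, b - g^k (a - r)), g a generator of
   F_q^*, by increasing level k < q/2 - 1.  A node on the paths of (a, b) and (a', b'), a != a',
   has levels k, k' with g^(k + k') (a' - a)^2 = (b - b')^2, so the two nodes of a shared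
   ordered pair would have equal level sums, hence equal levels; in characteristic 2 this
   forces them to coincide. *)

From mathcomp Require Import all_boot all_algebra all_field fingroup perm cyclic.
From mathcomp Require Import ring zify.
Set Implicit Arguments. Unset Strict Implicit. Unset Printing Implicit Defensive.
Import GRing.Theory.

(** * Bridge girth two *)

Definition pairs_unique (T : eqType) (I : Type) (s : I -> seq T) : Prop :=
  forall i j x y, precedes (s i) x y -> precedes (s j) x y -> i = j.

Lemma precedes_neq (T : eqType) (s : seq T) x y : precedes s x y -> x != y.
Proof. by case/and3P=> _ _; apply: contraTneq => ->; rewrite ltnn. Qed.

Lemma precedes_total (T : eqType) (s : seq T) x y :
  x \in s -> y \in s -> x != y -> precedes s x y || precedes s y x.
Proof.
move=> xs ys xy; rewrite /precedes xs ys /=.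
case: ltngtP => // eq_index; case/eqP: xy.
exact: index_inj eq_index.
Qed.

Lemma precedes_map (A B : eqType) (f : A -> B) (s : seq A) x y :
  injective f -> precedes (map f s) (f x) (f y) = precedes s x y.
Proof. by move=> f_inj; rewrite /precedes !mem_map // !index_map. Qed.

Section TwoBridges.
Variables (n p : nat) (P : 'I_p -> seq 'I_n).

Lemma two_bridge i j x y : i != j ->
  precedes (P i) x y -> precedes (P j) x y ->
  is_bridge P 2 (fun k => if k == 0 then x else y) (fun k => if k == 0 then i else j).
Proof.
move=> /eqP ij Pi Pj; have /eqP xy := precedes_neq Pi.
split=> //; last by case.
- by case=> [|[|a]] [|[|b]] //= _ _ /esym.
- by case=> [|[|a]] [|[|b]] //= _ _ /esym.
Qed.

Lemma bridge_girth_gt2P : bridge_girth_gt P 2 <-> pairs_unique P.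
Proof.
split=> [girth i j x y Pi Pj | uniqP].
  apply/eqP/negPn/negP=> ij; apply: (girth 2 (leqnn 2)).
  by do 2!eexists; apply: two_bridge ij Pi Pj.
move=> [|[|[|b]]] // _ [v [r bridge]].
- by case: bridge.
- by case: bridge => _ _ _ _; rewrite /precedes ltnn !andbF.
- case: bridge => _ _ r_inj /(_ 0 isT) Pr0 Pr1.
  by move/r_inj: (uniqP _ _ _ _ Pr0 Pr1) => /(_ isT isT).
Qed.

Lemma ordered_bridge_girth_gt2P (sigma : {perm 'I_p}) :
  ordered_bridge_girth_gt P sigma 2 <-> pairs_unique P.
Proof.
split=> [girth | /bridge_girth_gt2P girth b le_b2 [v [r [bridge _]]]]; last first.
  by apply: (girth b le_b2); exists v, r.
have ordered_bridge i j x y : sigma i < sigma j ->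
    precedes (P i) x y -> precedes (P j) x y -> False.
  move=> lt_ij Pi Pj; have ij : i != j by apply: contraTneq lt_ij => ->; rewrite ltnn.
  apply: (girth 2 (leqnn 2)); do 2!eexists; split; first exact: two_bridge ij Pi Pj.
  by case.
move=> i j x y Pi Pj; case: (ltngtP (sigma i) (sigma j)) => [lt_ij|lt_ji|/val_inj/perm_inj //].
- by case: (ordered_bridge _ _ _ _ lt_ij Pi Pj).
- by case: (ordered_bridge _ _ _ _ lt_ji Pj Pi).
Qed.

End TwoBridges.

Lemma achievable_ord2 n p s : achievable_ord n p 2 s <-> achievable n p 2 s.
Proof.
split=> [[P [sigma [HP /ordered_bridge_girth_gt2P girth sizeP]]] | [P [HP girth sizeP]]].
  by exists P; split=> //; apply/bridge_girth_gt2P.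
by exists P, 1%g; split=> //; apply/ordered_bridge_girth_gt2P/bridge_girth_gt2P.
Qed.

Lemma beta_max n p k s : achievable n p k s -> s <= beta n p k.
Proof. by rewrite /beta; case: ex_maxnP => m _ le_m ach_s; apply/le_m/decbP. Qed.

Lemma beta_achievable n p k : achievable n p k (beta n p k).
Proof. by rewrite /beta; case: ex_maxnP => m /decbP. Qed.

Lemma beta_star_max n p k s : achievable_ord n p k s -> s <= beta_star n p k.
Proof. by rewrite /beta_star; case: ex_maxnP => m _ le_m ach_s; apply/le_m/decbP. Qed.

Lemma beta_star_achievable n p k : achievable_ord n p k (beta_star n p k).
Proof. by rewrite /beta_star; case: ex_maxnP => m /decbP. Qed.

Lemma beta_star2 n p : beta_star n p 2 = beta n p 2.
Proof.
apply/eqP; rewrite eqn_leq; apply/andP; split.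
  by apply/beta_max/achievable_ord2/beta_star_achievable.
by apply/beta_star_max/achievable_ord2/beta_achievable.
Qed.

Section Relabel.
Variables (A I : finType) (n p : nat) (s : I -> seq A).
Hypotheses (le_A_n : #|A| <= n) (le_I_p : #|I| <= p).

Let node (a : A) : 'I_n := widen_ord le_A_n (enum_rank a).

Let node_inj : injective node.
Proof. by move=> a b /(congr1 val) /= /val_inj /enum_rank_inj. Qed.

Let relabel (j : 'I_p) : seq 'I_n :=
  if insub (val j) : option 'I_#|I| is Some k then map node (s (enum_val k))
  else [::].

Lemma achievable_relabel : (forall i, uniq (s i)) -> pairs_unique s ->
  achievable n p 2 (\sum_i size (s i)).
Proof.
move=> s_uniq s_pairs; exists relabel; split.
- move=> j; rewrite /relabel; case: insubP => // k _ _.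
  by rewrite map_inj_uniq.
- apply/bridge_girth_gt2P => i j x y; rewrite /relabel.
  case: insubP => [ki _ val_ki|_]; last by case/and3P.
  case: insubP => [kj _ val_kj|_ _]; last by case/and3P.
  move=> Pi Pj; have /and3P[/mapP[x' _ ex] /mapP[y' _ ey] _] := Pi; subst x y.
  rewrite !precedes_map // in Pi Pj.
  have /enum_val_inj eq_k := s_pairs _ _ _ _ Pi Pj.
  by apply: val_inj; rewrite -val_ki -val_kj eq_k.
- pose size_at (k : nat) :=
    if insub k : option 'I_#|I| is Some k' then size (s (enum_val k')) else 0.
  rewrite /psize (big_enum_val (fun i => size (s i))) /=.
  rewrite [RHS](eq_bigr (size_at \o val)) => [|k _]; last by rewrite /size_at /= valK.
  rewrite (big_ord_widen _ size_at le_I_p) [RHS]big_mkcond; apply: eq_bigr => j _.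
  by rewrite /relabel /size_at; case: insubP => [k -> _|/negbTE ->]; rewrite ?size_map.
Qed.

End Relabel.

(** * Upper bounds *)

Lemma sum_nat_boolE (I : finType) (b : pred I) : \sum_i (b i : nat) = #|b|.
Proof.
rewrite -sum1_card [RHS]big_mkcond; apply: eq_bigr => i _.
by rewrite unfold_in; case: (b i).
Qed.

Lemma double_count (I J : finType) (R : I -> J -> bool) :
  \sum_i #|[pred j | R i j]| = \sum_j #|[pred i | R i j]|.
Proof.
transitivity (\sum_i \sum_j (R i j : nat)).
  by apply: eq_bigr => i _; rewrite sum_nat_boolE.
by rewrite exchange_big; apply: eq_bigr => j _; rewrite sum_nat_boolE.
Qed.

Lemma incidence_ffact_le (I T : finType) (inc : I -> pred T) (k c : nat) :
  (forall f : {ffun 'I_k -> T}, injective f -> #|[pred i | f \in ffun_on (inc i)]| <= c) ->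
  \sum_i #|inc i| ^_ k <= c * #|T| ^ k.
Proof.
move=> le_c.
have card_inj i : #|inc i| ^_ k =
    #|[pred f : {ffun 'I_k -> T} | (f \in ffun_on (inc i)) && injectiveb f]|.
  by rewrite -[k in LHS](card_ord k) -card_inj_ffuns_on; apply: eq_card => f; rewrite !inE.
rewrite (eq_bigr _ (fun i _ => card_inj i)) double_count.
rewrite -[k in _ ^ k](card_ord k) -card_ffun mulnC -sum_nat_const.
apply: leq_sum => f _; case: (injectiveP f) => [f_inj|_].
  by apply: leq_trans (le_c f f_inj); apply: subset_leq_card; apply/subsetP => i /andP[].
by rewrite (eq_card0 (A := [pred i | _])) // => i; rewrite inE andbF.
Qed.

Section PowerMeans.
Variables (I : finType) (f : I -> nat).

Lemma sum_sym_le (A B : I -> I -> nat) :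
  (forall i j, 2 * A i j <= B i j + B j i) ->
  \sum_i \sum_j A i j <= \sum_i \sum_j B i j.
Proof.
move=> le_AB; rewrite -(leq_pmul2l (isT : 0 < 2)) big_distrr /=.
have -> : 2 * \sum_i \sum_j B i j = \sum_i \sum_j (B i j + B j i).
  rewrite mul2n -addnn [X in _ + X]exchange_big -big_split /=.
  by apply: eq_bigr => i _; rewrite big_split.
by apply: leq_sum => i _; rewrite big_distrr; apply: leq_sum => j _.
Qed.

Lemma sqr_sum_le : (\sum_i f i) ^ 2 <= #|I| * \sum_i f i ^ 2.
Proof.
have -> : #|I| * \sum_i f i ^ 2 = \sum_(i : I) \sum_j f j ^ 2 by rewrite sum_nat_const.
rewrite -mulnn big_distrlr; apply: sum_sym_le => i j; rewrite addnC; exact: nat_Cauchy.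
Qed.

Lemma sqr_sum_sq_le : (\sum_i f i ^ 2) ^ 2 <= (\sum_i f i) * \sum_i f i ^ 3.
Proof.
rewrite -mulnn !big_distrlr; apply: sum_sym_le => i j /=.
have := leq_mul (leqnn (f i * f j)) (nat_Cauchy (f i) (f j)).
move: (f i) (f j) => a b; rewrite !expnS !expn0 !muln1; nia.
Qed.

Lemma cube_sum_le : (\sum_i f i) ^ 3 <= #|I| ^ 2 * \sum_i f i ^ 3.
Proof.
have le_sq := sqr_sum_le; have le_sq_sq := sqr_sum_sq_le.
move: (\sum_i f i) (\sum_i f i ^ 2) (\sum_i f i ^ 3) le_sq le_sq_sq => s s2 s3 le_sq le_sq_sq.
have [->|s_gt0] := posnP s; first by rewrite exp0n.
rewrite -(leq_pmul2l s_gt0); apply: (@leq_trans ((#|I| * s2) ^ 2)).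
  by rewrite -expnS -[4]/(2 * 2) expnM leq_exp2r.
by rewrite expnMn mulnCA leq_mul2l le_sq_sq orbT.
Qed.

End PowerMeans.

Lemma sqrn_ffact2 m : m ^ 2 = m ^_ 2 + m.
Proof. by case: m => [|m] //; rewrite ffactSS ffactn1 mulSn; nia. Qed.

Lemma cube_subn2_le_ffact3 m : (m - 2) ^ 3 <= m ^_ 3.
Proof. by case: m => [|[|[|m]]] //; rewrite !ffactSS ffactn0; nia. Qed.

Definition pdegree n p (P : 'I_p -> seq 'I_n) (x : 'I_n) : nat := #|[pred i | x \in P i]|.

Section UpperBounds.
Variables (n p : nat) (P : 'I_p -> seq 'I_n).
Hypotheses (P_uniq : path_system P) (P_pairs : pairs_unique P).

Lemma orientation_inj x y : x != y ->
  {in [pred i | (x \in P i) && (y \in P i)] &, injective (fun i => precedes (P i) x y)}.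
Proof.
move=> xy i j /andP[xi yi] /andP[xj yj] /=.
case Pi: (precedes (P i) x y) => /esym Pj; first exact: P_pairs Pi Pj.
have /orP[|Pi'] := precedes_total xi yi xy; first by rewrite Pi.
have /orP[|Pj'] := precedes_total xj yj xy; first by rewrite Pj.
exact: P_pairs Pi' Pj'.
Qed.

Lemma card_common_paths_le2 x y : x != y ->
  #|[pred i | (x \in P i) && (y \in P i)]| <= 2.
Proof. by move=> xy; rewrite -card_bool; apply: leq_card_in (orientation_inj xy). Qed.

Lemma sum_size_ffact2_le : \sum_i size (P i) ^_ 2 <= 2 * n ^ 2.
Proof.
rewrite -[n in n ^ 2]card_ord.
rewrite (eq_bigr (fun i => #|[pred x | x \in P i]| ^_ 2)) => [|i _]; last first.
  by rewrite -(card_uniqP (P_uniq i)); congr (_ ^_ _); apply: eq_card.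
apply: incidence_ffact_le => f f_inj.
have f01 : f ord0 != f ord_max by rewrite (inj_eq f_inj).
apply: leq_trans (card_common_paths_le2 f01); apply: subset_leq_card.
by apply/subsetP => i; rewrite !inE => /ffun_onP on_i; rewrite !on_i.
Qed.

Lemma sum_pdegree_ffact3_le : \sum_x pdegree P x ^_ 3 <= p ^ 3.
Proof.
rewrite -[p in p ^ 3]card_ord -[_ ^ 3]mul1n; apply: incidence_ffact_le => f f_inj.
apply/card_le1_eqP => x y; rewrite !inE => /ffun_onP x_on /ffun_onP y_on.
apply/eqP/negPn/negP => yx; have := card_common_paths_le2 yx.
apply/negP; rewrite -ltnNge.
rewrite -[3](card_ord 3) -cardsT -(card_imset _ f_inj); apply: subset_leq_card.
apply/subsetP => _ /imsetP[t _ ->]; move: (x_on t) (y_on t).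
by rewrite !inE => -> ->.
Qed.

Lemma psize_sq_le : psize P ^ 2 <= p * (2 * n ^ 2 + psize P).
Proof.
apply: leq_trans (sqr_sum_le _) _; rewrite card_ord leq_mul2l; apply/orP; right.
by rewrite (eq_bigr _ (fun i _ => sqrn_ffact2 _)) big_split leq_add2r sum_size_ffact2_le.
Qed.

Lemma psize_pdegree : psize P = \sum_x pdegree P x.
Proof.
rewrite /psize -(double_count (fun i x => x \in P i)); apply: eq_bigr => i _.
by rewrite -(card_uniqP (P_uniq i)); apply: eq_card.
Qed.

Lemma psize_cube_le : (psize P - 2 * n) ^ 3 <= n ^ 2 * p ^ 3.
Proof.
rewrite psize_pdegree.
have le_sum : \sum_x pdegree P x - 2 * n <= \sum_x (pdegree P x - 2).
  rewrite leq_subLR; apply: leq_trans (_ : _ <= \sum_x (pdegree P x - 2 + 2)) _.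
    by apply: leq_sum => x _; rewrite addnC -leq_subLR.
  by rewrite big_split sum_nat_const card_ord addnC mulnC.
apply: (@leq_trans ((\sum_x (pdegree P x - 2)) ^ 3)); first by rewrite leq_exp2r.
apply: leq_trans (cube_sum_le _) _; rewrite card_ord leq_mul2l; apply/orP; right.
apply: leq_trans sum_pdegree_ffact3_le; apply: leq_sum => x _; exact: cube_subn2_le_ffact3.
Qed.

End UpperBounds.

(** * Constructions *)

Lemma pairs_unique_of_meet_le1 (T : eqType) (I : Type) (s : I -> seq T) :
  (forall i j x y, x != y -> x \in s i -> y \in s i -> x \in s j -> y \in s j -> i = j) ->
  pairs_unique s.
Proof.
move=> meet i j x y Pi Pj; have /and3P[xi yi _] := Pi; have /and3P[xj yj _] := Pj.
exact: meet (precedes_neq Pi) xi yi xj yj.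
Qed.

Lemma achievable_embed (A I : finType) (n p : nat) (s : I -> seq A) (m : nat) :
  #|A| <= n -> #|I| <= p -> (forall i, uniq (s i)) -> pairs_unique s ->
  (forall i, m <= size (s i)) -> exists2 t, achievable n p 2 t & #|I| * m <= t.
Proof.
move=> le_A le_I s_uniq s_pairs le_m; exists (\sum_i size (s i)).
  exact: achievable_relabel.
by rewrite -sum_nat_const; apply: leq_sum => i _.
Qed.

Section Lines.
Local Open Scope ring_scope.
Variables (F : finFieldType) (X M : finType) (xs : X -> F) (ms : M -> F).
Hypotheses (xs_inj : injective xs) (ms_inj : injective ms).

Definition line (mc : M * F) : seq (X * F) :=
  [seq (x, xs x * ms mc.1 + mc.2) | x <- enum X].

Lemma line_uniq mc : uniq (line mc).
Proof. by rewrite map_inj_uniq ?enum_uniq // => x y []. Qed.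

Lemma size_line mc : size (line mc) = #|X|.
Proof. by rewrite size_map -cardE. Qed.

Lemma mem_line mc z : z \in line mc -> z.2 = xs z.1 * ms mc.1 + mc.2.
Proof. by case/mapP => x _ ->. Qed.

Lemma lines_pairs_unique : pairs_unique line.
Proof.
apply: pairs_unique_of_meet_le1 => [[m c] [m' c']] [x u] [y v] /= ne_xy.
move=> /mem_line/= ex /mem_line/= ey /mem_line/= ex' /mem_line/= ey'.
have ne_xs : xs x - xs y != 0.
  rewrite subr_eq0; apply: contra ne_xy => /eqP/xs_inj eq_xy.
  by rewrite -eq_xy ex ey eq_xy.
have slope (m0 : M) c0 : u = xs x * ms m0 + c0 -> v = xs y * ms m0 + c0 ->
    u - v = (xs x - xs y) * ms m0.
  by move=> -> ->; ring.
have eq_m : m = m' by apply/ms_inj/(mulfI ne_xs); rewrite -(slope _ c) // -(slope _ c').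
rewrite -eq_m; congr (_, _); apply: (@addrI _ (xs x * ms m)).
by rewrite -ex eq_m.
Qed.

End Lines.

Lemma ord_embedding (T : finType) k : k <= #|T| -> exists f : 'I_k -> T, injective f.
Proof.
move=> le_k; exists (fun i => enum_val (widen_ord le_k i)).
by move=> i j /enum_val_inj /(congr1 val) /= /val_inj.
Qed.

Lemma lines_achievable (F : finFieldType) n p al be :
  al <= #|F| -> be <= #|F| -> al * #|F| <= n -> be * #|F| <= p ->
  exists2 s, achievable n p 2 s & be * #|F| * al <= s.
Proof.
move=> /ord_embedding[xs xs_inj] /ord_embedding[ms ms_inj] le_n le_p.
have := achievable_embed (m := al) _ _ (line_uniq xs ms) (lines_pairs_unique xs_inj ms_inj).
by rewrite !card_prod !card_ord; apply=> // mc; rewrite size_line card_ord.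
Qed.

Local Open Scope ring_scope.

Lemma pchar2_sqr_inj (F : fieldType) : 2%N \in [pchar F] -> injective (fun x : F => x ^+ 2).
Proof. by move=> ch2 x y; rewrite -!(pFrobenius_autE ch2); apply: fmorph_inj. Qed.

Lemma finField_prim_root (F : finFieldType) : exists g : F, (#|F|.-1).-primitive_root g.
Proof.
pose units := [seq x <- enum F | x != 0].
have card_gt0 : (0 < #|F|)%N by apply/card_gt0P; exists 0.
have size_units : size units = #|F|.-1.
  rewrite size_filter; have := count_predC (pred1 0) (enum F).
  by rewrite count_uniq_mem ?enum_uniq // mem_enum -cardT add1n => <-.
have units_gt0 : (0 < #|F|.-1)%N.
  rewrite -size_units -has_predT; apply/hasP; exists 1 => //.
  by rewrite mem_filter oner_neq0 mem_enum.
have /hasP[g _ g_prim] : has (#|F|.-1).-primitive_root units.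
  apply: has_prim_root; rewrite ?size_units ?filter_uniq -?enumT ?enum_uniq //.
  apply/allP => x; rewrite mem_filter => /andP[x_neq0 _].
  rewrite unity_rootE; apply/eqP; apply: (mulIf x_neq0).
  by rewrite -exprSr prednK // expf_card mul1r.
by exists g.
Qed.

Lemma node_collision (F : comPzRingType) (a a' b b' r X Y : F) :
  X * (a - r) ^+ 2 = Y * (a' - r) ^+ 2 -> b - X * (a - r) = b' - Y * (a' - r) ->
  X * Y * (a' - a) ^+ 2 = (b - b') ^+ 2.
Proof.
move=> e1 e2; have -> : b - b' = X * (a - r) - Y * (a' - r).
  by rewrite -[b](subrK (X * (a - r))) e2; ring.
apply/eqP; rewrite eq_sym -subr_eq0; apply/eqP.
transitivity (X * (X * (a - r) ^+ 2 - Y * (a' - r) ^+ 2)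
              + Y * (Y * (a' - r) ^+ 2 - X * (a - r) ^+ 2)); first by ring.
by rewrite e1 !subrr !mulr0 addr0.
Qed.

Section GPaths.
Variables (F : finFieldType) (A R : finType) (as_ : A -> F) (rs : R -> F) (g : F) (h : nat).
Hypotheses (F_pchar2 : 2%N \in [pchar F]) (g_prim : (#|F|.-1).-primitive_root g).
Hypotheses (h_small : (2 * h < #|F|.-1)%N) (as_inj : injective as_) (rs_inj : injective rs).

Local Notation q1 := #|F|.-1.

Lemma expr_g_inj i j : (i < q1)%N -> (j < q1)%N -> g ^+ i = g ^+ j -> i = j.
Proof.
by move=> lt_i lt_j /eqP; rewrite (eq_prim_root_expr g_prim) !modn_small // => /eqP.
Qed.

Lemma g_neq0 : g != 0.
Proof. by rewrite (prim_root_eq0 g_prim) -lt0n (prim_order_gt0 g_prim). Qed.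

Definition dlog (z : F) : nat := index z (mkseq (fun i => g ^+ i) q1).

Lemma dlogE k : (k < q1)%N -> dlog (g ^+ k) = k.
Proof.
move=> lt_k; rewrite /dlog -(nth_mkseq 0 (fun i => g ^+ i) lt_k) index_uniq ?size_mkseq //.
by apply/mkseq_uniqP => i j; rewrite !inE; apply: expr_g_inj.
Qed.

Definition gnode (a b : F) (k : nat) (r : R) : F * R * F :=
  (g ^+ k * (a - rs r) ^+ 2, r, b - g ^+ k * (a - rs r)).

Definition level (a : F) (x : F * R * F) : nat := dlog (x.1.1 / (a - rs x.1.2) ^+ 2).

Lemma level_gnode a b k r : rs r != a -> (k < q1)%N -> level a (gnode a b k r) = k.
Proof. by move=> ra lt_k; rewrite /level mulfK ?dlogE // expf_neq0 // subr_eq0 eq_sym. Qed.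

Definition gpath (ab : A * F) : seq (F * R * F) :=
  sort (relpre (level (as_ ab.1)) leq)
    [seq gnode (as_ ab.1) ab.2 k r | r <- [seq r <- enum R | rs r != as_ ab.1], k <- iota 0 h].

Lemma lt_h_q1 k : (k < h)%N -> (k < q1)%N.
Proof.
move=> lt_kh; apply: leq_trans h_small; rewrite ltnS.
by apply: leq_trans (ltnW lt_kh) _; rewrite leq_pmull.
Qed.

Lemma mem_gpath ab x : x \in gpath ab ->
  exists r k, [/\ rs r != as_ ab.1, (k < h)%N & x = gnode (as_ ab.1) ab.2 k r].
Proof.
rewrite mem_sort => /allpairsP[[r k] /= [r_in k_in ->]]; exists r, k.
by move: r_in k_in; rewrite mem_filter mem_iota add0n => /andP[-> _] /andP[_ ->].
Qed.

Lemma gpath_uniq ab : uniq (gpath ab).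
Proof.
rewrite sort_uniq allpairs_uniq ?filter_uniq -?enumT ?enum_uniq ?iota_uniq //.
move=> [r k] [r' k'] /allpairsP[[r1 k1] [/= r1_in k1_in [-> ->]]].
move=> /allpairsP[[r2 k2] [/= _ k2_in [-> ->]]] /= [e1 er _]; subst r2; congr (_, _).
move: r1_in k1_in k2_in; rewrite mem_filter !mem_iota !add0n.
move=> /andP[r1a _] /andP[_ /lt_h_q1 lt1] /andP[_ /lt_h_q1 lt2]; apply: expr_g_inj lt1 lt2 _.
by apply: (mulIf _ e1); rewrite expf_neq0 // subr_eq0 eq_sym.
Qed.

Lemma size_gpath ab : ((#|R| - 1) * h <= size (gpath ab))%N.
Proof.
rewrite size_sort size_allpairs size_iota leq_mul2r size_filter; apply/orP; right.
have le1 : (count (fun r => rs r == as_ ab.1) (enum R) <= 1)%N.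
  rewrite -(count_map rs (pred1 (as_ ab.1))) count_uniq_mem ?leq_b1 //.
  by rewrite map_inj_uniq ?enum_uniq.
by rewrite leq_subLR cardE -(count_predC (fun r => rs r == as_ ab.1)) leq_add2r.
Qed.

Lemma gpath_level_mono ab x y : precedes (gpath ab) x y ->
  (level (as_ ab.1) x <= level (as_ ab.1) y)%N.
Proof.
case/and3P=> x_in y_in; apply: (sorted_ltn_index _ (sort_sorted _ _)) => //.
  by move=> ? ? ?; apply: leq_trans.
by move=> u v; apply: leq_total.
Qed.

Lemma gnode_same_center a b b' k k' r r' : rs r != a ->
  gnode a b k r = gnode a b' k' r' -> b = b'.
Proof.
move=> ra [e1 er e3]; subst r'.
have ne0 : (a - rs r) ^+ 2 != 0 by rewrite expf_neq0 // subr_eq0 eq_sym.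
by move: e3; rewrite (mulIf ne0 e1) => /addIr.
Qed.

Lemma gnode_collision a b a' b' k k' r r' : gnode a b k r = gnode a' b' k' r' ->
  g ^+ (k + k') * (a' - a) ^+ 2 = (b - b') ^+ 2.
Proof. by case=> e1 er e3; subst r'; rewrite exprD; apply: node_collision e1 e3. Qed.

Lemma gnode_same_level a b a' b' k k' r r' : a != a' ->
  gnode a b k r = gnode a' b' k' r -> gnode a b k r' = gnode a' b' k' r' -> r = r'.
Proof.
move=> aa' [e1 e3] [_ f3]; apply: rs_inj.
have ne_g : g ^+ k - g ^+ k' != 0.
  rewrite subr_eq0; apply: contra aa' => /eqP eq_g; rewrite eq_g in e1.
  by have /(pchar2_sqr_inj F_pchar2)/addIr -> := mulfI (expf_neq0 k' g_neq0) e1.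
have : (g ^+ k - g ^+ k') * (rs r - rs r') = 0.
  transitivity ((b - g ^+ k * (a - rs r)) - (b - g ^+ k * (a - rs r'))
    - ((b' - g ^+ k' * (a' - rs r)) - (b' - g ^+ k' * (a' - rs r')))); first by ring.
  by rewrite e3 f3 subrr.
by move/eqP; rewrite mulf_eq0 (negbTE ne_g) subr_eq0 => /eqP.
Qed.

Lemma gpath_pairs_unique : pairs_unique gpath.
Proof.
move=> [i b] [i' b'] x y Px Py; have ne_xy := precedes_neq Px.
move: (gpath_level_mono Px) (gpath_level_mono Py) => /=.
case/and3P: Px => /mem_gpath[rx [kx [/= rx_a kx_h ex]]].
move=> /mem_gpath[ry [ky [/= ry_a ky_h ey]]] _.
case/and3P: Py => /mem_gpath[rx' [kx' [/= rx_a' kx_h' Ex]]].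
move=> /mem_gpath[ry' [ky' [/= ry_a' ky_h' Ey]]] _.
subst x y; have [erx ery] : rx' = rx /\ ry' = ry by case: Ex Ey => _ <- _ [_ <- _].
subst rx' ry'; rewrite !level_gnode ?lt_h_q1 // => le_k.
rewrite Ex Ey !level_gnode ?lt_h_q1 // => le_k'.
have [eq_a|ne_a] := eqVneq (as_ i) (as_ i').
  by rewrite -eq_a in Ex; rewrite (as_inj eq_a) (gnode_same_center rx_a Ex).
have ne0 : (as_ i' - as_ i) ^+ 2 != 0 by rewrite expf_neq0 // subr_eq0 eq_sym.
have eq_sum : (kx + kx' = ky + ky')%N.
  apply: expr_g_inj; [lia | lia | apply: (mulIf ne0)].
  by rewrite (gnode_collision Ex) (gnode_collision Ey).
have [eq_kx eq_kx'] : kx = ky /\ kx' = ky' by lia.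
subst ky ky'; case/eqP: ne_xy; congr gnode; exact: gnode_same_level ne_a Ex Ey.
Qed.

End GPaths.

Lemma gpaths_achievable (F : finFieldType) n p al be h :
  2%N \in [pchar F] -> (al <= #|F|)%N -> (be <= #|F|)%N -> (2 * h < #|F|.-1)%N ->
  (#|F| * be * #|F| <= n)%N -> (al * #|F| <= p)%N ->
  exists2 s, achievable n p 2 s & (al * #|F| * ((be - 1) * h) <= s)%N.
Proof.
move=> F_pchar2 /ord_embedding[as_ as_inj] /ord_embedding[rs rs_inj] h_small le_n le_p.
have [g g_prim] := finField_prim_root F.
have := achievable_embed (m := ((be - 1) * h)%N) _ _ (gpath_uniq as_ rs g_prim h_small)
  (gpath_pairs_unique F_pchar2 g_prim h_small as_inj rs_inj).
rewrite !card_prod !card_ord; apply=> // ab.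
by have := size_gpath as_ g h rs_inj ab; rewrite card_ord.
Qed.

Local Close Scope ring_scope.

(** * Choice of the field *)

Lemma pow2_threshold (P : pred nat) m : ~~ P 1 -> P (2 ^ m) ->
  exists k, ~~ P (2 ^ k) && P (2 ^ k.+1).
Proof.
move=> nP1 Pm; have exP : exists k, P (2 ^ k) by exists m.
case: (ex_minnP exP) => [[|k] Pk min_k]; first by rewrite expn0 (negbTE nP1) in Pk.
by exists k; rewrite Pk andbT; apply/negP => /min_k; rewrite ltnn.
Qed.

Lemma char2_field_threshold (P : pred nat) N : ~~ P 1 -> (forall q, N <= q -> P q) ->
  exists t (F : finFieldType), [/\ (2%N \in [pchar F])%R, #|F| = 2 * t, ~~ P t & P (2 * t)].
Proof.
move=> nP1 P_large; have := P_large _ (ltnW (ltn_expl N (ltnSn 1))).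
case/(pow2_threshold nP1) => k /andP[nPk Pk1].
have [F F_pchar2 F_card] := pPrimePowerField (isT : prime 2) (ltn0Sn k).
by exists (2 ^ k), F; rewrite -expnS.
Qed.

Lemma lt_twice_divn_mul n q : 0 < n %/ q -> n < 2 * (n %/ q * q).
Proof.
case: q => [|q] n_q; first by rewrite divn0 in n_q.
apply: leq_trans (ltn_ceil _ (ltn0Sn q)) _; rewrite mulSn mul2n -addnn leq_add2r.
by rewrite leq_pmull.
Qed.

Lemma divn_leq_of_leq_mul n q d : n <= q * d -> n %/ d <= q.
Proof. by case: d => [|d] le_n; rewrite ?divn0 // -(mulnK q (ltn0Sn d)) leq_div2r. Qed.

Lemma lines_regime n p : 32 <= p -> n <= 8 * p -> 4 * p <= n * n ->
  exists s q, [/\ s <= beta n p 2, n * p < 4 * s * q & q * q < 32 * p].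
Proof.
move=> p_ge n_le n_ge.
pose big q := (n <= q * q) && (p <= q * q).
have big_large q : n + p <= q -> big q by rewrite /big; nia.
have [|t [F [F_pchar2 F_card /nandP small_t /andP[n_q p_q]]]] :=
  char2_field_threshold (P := big) _ big_large; first by rewrite /big; lia.
set q := 2 * t in n_q p_q F_card.
have t_sq : t * t < 8 * p by case: small_t; lia.
have q_le_p : q <= p by rewrite /q; nia.
have q_le_n : q <= n by rewrite /q; case: small_t; nia.
have [s ach_s le_s] : exists2 s, achievable n p 2 s & p %/ q * q * (n %/ q) <= s.
  by rewrite -F_card; apply: lines_achievable; rewrite ?F_card ?leq_divM ?divn_leq_of_leq_mul.
exists s, q; split; [exact: beta_max | | rewrite /q; nia].
have q_gt0 : 0 < q by rewrite /q; nia.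
have := lt_twice_divn_mul (_ : 0 < n %/ q); have := lt_twice_divn_mul (_ : 0 < p %/ q).
rewrite !divn_gt0 // => /(_ q_le_p) lt_p /(_ q_le_n) lt_n.
apply: leq_trans (ltn_mul lt_n lt_p) _; nia.
Qed.

Lemma gpaths_size_gt n p t s (q := 2 * t) : 2 <= t -> q <= p -> 2 * (q * q) <= n ->
  p %/ q * q * ((n %/ (q * q) - 1) * (t - 1)) <= s -> n * p < 24 * s * q.
Proof.
move=> t_ge2 q_le_p q2_le_n le_s.
set al := p %/ q in le_s; set be := n %/ (q * q) in le_s.
have q_gt0 : 0 < q by rewrite /q; lia.
have lt_p : p < 2 * (al * q) by apply: lt_twice_divn_mul; rewrite divn_gt0.
have be_ge2 : 2 <= be by rewrite leq_divRL; [exact: q2_le_n | rewrite muln_gt0 q_gt0].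
have qq_gt0 : 0 < q * q by rewrite muln_gt0 q_gt0.
have lt_n : n < 3 * ((be - 1) * (q * q)).
  apply: leq_trans (ltn_ceil n qq_gt0) _.
  by rewrite -/be [3 * _]mulnA leq_mul2r; apply/orP; right; lia.
have le_q : q <= 4 * (t - 1) by rewrite /q; lia.
rewrite -(ltn_pmul2r q_gt0); apply: leq_trans (_ : _ < 6 * (al * q * (be - 1) * q * q) * q) _.
  by rewrite ltn_pmul2r //; apply: leq_trans (ltn_mul lt_n lt_p) _; nia.
apply: leq_trans (_ : _ <= 6 * (al * q * (be - 1) * q * q) * (4 * (t - 1))) _.
  by rewrite leq_mul2l le_q orbT.
rewrite (_ : 6 * _ * _ = 24 * (al * q * ((be - 1) * (t - 1))) * q * q); last by ring.
by rewrite !leq_mul2r leq_mul2l le_s !orbT.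
Qed.

Lemma gpaths_regime n p : 4 <= p -> 8 * p < n -> 512 <= n -> 8 * n <= p * p * p ->
  exists s q, [/\ s <= beta n p 2, n * p < 24 * s * q &
                  q * q < 4 * p \/ q * q * q < 8 * n].
Proof.
move=> p_ge n_gt n_ge p_cube.
pose big q := (p <= q * q) && (n <= q * q * q).
have big_large q : n + p <= q -> big q by rewrite /big; nia.
have [|t [F [F_pchar2 F_card /nandP small_t /andP[p_q n_q]]]] :=
  char2_field_threshold (P := big) _ big_large; first by rewrite /big; lia.
set q := 2 * t in n_q p_q F_card.
have t_ge2 : 2 <= t by nia.
have q_le_p : q <= p.
  rewrite leqNgt; apply/negP => lt_pq; have sq := ltn_mul lt_pq lt_pq.
  have cube := ltn_mul sq lt_pq; rewrite /q in sq cube.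
  case: small_t; rewrite -ltnNge => small_t; nia.
have q2_le_n : 2 * (q * q) <= n.
  rewrite /q leqNgt; apply/negP => lt_n.
  case: small_t; rewrite -ltnNge => small_t; first lia.
  have t_lt8 : t < 8 by rewrite -(ltn_pmul2r (_ : 0 < t * t)); nia.
  nia.
have [s ach_s le_s] :
    exists2 s, achievable n p 2 s & p %/ q * q * ((n %/ (q * q) - 1) * (t - 1)) <= s.
  rewrite -F_card; apply: gpaths_achievable => //; rewrite ?F_card.
  - exact: divn_leq_of_leq_mul.
  - by apply: divn_leq_of_leq_mul; rewrite mulnA.
  - by rewrite /q; lia.
  - by rewrite mulnAC mulnC leq_divM.
  - exact: leq_divM.
exists s, q; split; [exact: beta_max | exact: gpaths_size_gt le_s |].
by case: small_t; rewrite -ltnNge /q => ?; [left | right]; nia.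
Qed.

Lemma beta2_large_witness n p : 64 <= p -> 64 * p <= n * n -> 512 * n <= p * p * p ->
  exists s q, [/\ s <= beta n p 2, n * p < 24 * s * q &
                  q * q <= 36 * p \/ q * q * q <= 216 * n].
Proof.
move=> p_ge n_ge p_cube; case: (leqP n (8 * p)) => n_p.
  have p_ge' : 32 <= p by lia.
  have n_ge' : 4 * p <= n * n by lia.
  have [s [q [le_s lt_np lt_q]]] := lines_regime p_ge' n_p n_ge'.
  by exists s, q; split=> //; [lia | left; lia].
have p_ge' : 4 <= p by lia.
have n_ge' : 512 <= n by lia.
have p_cube' : 8 * n <= p * p * p by lia.
have [s [q [le_s lt_np lt_q]]] := gpaths_regime p_ge' n_p n_ge' p_cube'.
by exists s, q; split=> //; lia.
Qed.

(** * Real estimates *)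

From Stdlib Require Import Reals Lra Psatz.

Local Open Scope R_scope.

Definition beta2_min (N P : R) : R := Rmin (N * sqrt P) (Rpower N (2/3) * P).

Definition beta2_rate (N P : R) : R := beta2_min N P + N + P.

Lemma le_of_sqr_le_sqr x y : 0 <= y -> x * x <= y * y -> x <= y.
Proof. by move=> y_ge0 le_sq; apply: Rnot_lt_le => lt_yx; nra. Qed.

Lemma le_of_cube_le_cube x y : 0 <= y -> x * x * x <= y * y * y -> x <= y.
Proof.
move=> y_ge0 le_cube; apply: Rnot_lt_le => lt_yx.
have lt_sq : y * y < x * x by apply: Rmult_le_0_lt_compat.
have : y * y * y < x * x * x by apply: Rmult_le_0_lt_compat => //; nra.
lra.
Qed.

Section Rates.
Variables (N P : R).
Hypotheses (N_gt0 : 0 < N) (P_gt0 : 0 < P).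

Let c := Rpower N (1/3).

Let c_gt0 : 0 < c.
Proof. exact: exp_pos. Qed.

Let c_cube : c * c * c = N.
Proof.
by rewrite /c -!Rpower_plus (_ : 1/3 + 1/3 + 1/3 = 1) ?Rpower_1 //; field.
Qed.

Let c_sqr : Rpower N (2/3) = c * c.
Proof. by rewrite /c -Rpower_plus; f_equal; field. Qed.

Let sqrtP_sqr : sqrt P * sqrt P = P.
Proof. by apply: sqrt_sqrt; lra. Qed.

Let sqrtP_gt0 : 0 < sqrt P.
Proof. exact: sqrt_lt_R0. Qed.

Lemma beta2_rate_upper b e : 0 <= b -> b * b <= P * (2 * (N * N) + b) ->
  b - 2 * N <= e -> e * e * e <= N * N * (P * P * P) -> b <= 2 * beta2_rate N P.
Proof.
move=> b_ge0 b_sq le_e e_cube.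
have b_le : b <= P + 2 * (N * sqrt P).
  apply: Rnot_lt_le => lt_b.
  have NsP_ge0 : 0 <= 2 * (N * sqrt P) by nra.
  have lt_b1 : 2 * (N * sqrt P) < b by lra.
  have lt_b2 : 2 * (N * sqrt P) < b - P by lra.
  have := Rmult_le_0_lt_compat _ _ _ _ NsP_ge0 NsP_ge0 lt_b1 lt_b2.
  rewrite (_ : 2 * (N * sqrt P) * (2 * (N * sqrt P)) = 4 * (N * N) * P); last first.
    by rewrite -[in RHS]sqrtP_sqr; ring.
  have : 0 < N * N * P by nra.
  lra.
have e_le : e <= c * c * P.
  apply: le_of_cube_le_cube; first by nra.
  rewrite (_ : c * c * P * (c * c * P) * (c * c * P)
              = (c * c * c) * (c * c * c) * (P * P * P)); last by ring.
  by rewrite c_cube.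
rewrite /beta2_rate /beta2_min c_sqr /Rmin; case: Rle_dec => _; nra.
Qed.

Lemma beta2_min_large : 8 * (N + P) < beta2_min N P ->
  [/\ 64 < P, 64 * P < N * N & 512 * N < P * P * P].
Proof.
rewrite /beta2_min c_sqr => lt_min.
have lt1 := Rlt_le_trans _ _ _ lt_min (Rmin_l _ _).
have lt2 := Rlt_le_trans _ _ _ lt_min (Rmin_r _ _).
have sqrtP_gt8 : 8 < sqrt P by nra.
have N_gt : 8 * sqrt P < N by nra.
have P_gt : 8 * c < P by nra.
split.
- by rewrite -sqrtP_sqr; nra.
- by rewrite -[in X in X < _]sqrtP_sqr; nra.
- rewrite -c_cube (_ : 512 * (c * c * c) = 8 * c * (8 * c) * (8 * c)); last by ring.
  by apply: Rmult_le_0_lt_compat => //; try apply: Rmult_le_0_lt_compat; nra.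
Qed.

Lemma beta2_min_le_of_mul s q : 0 <= s -> 0 <= q -> N * P < 24 * s * q ->
  q * q <= 36 * P \/ q * q * q <= 216 * N -> beta2_min N P <= 144 * s.
Proof.
rewrite /beta2_min c_sqr => s_ge0 q_ge0 lt_NP [q_sq|q_cube].
- have q_le : q <= 6 * sqrt P by apply: le_of_sqr_le_sqr; nra.
  apply: Rle_trans (Rmin_l _ _) _; apply: (Rmult_le_reg_r (sqrt P)) => //; nra.
- have q_le : q <= 6 * c by apply: le_of_cube_le_cube; nra.
  apply: Rle_trans (Rmin_r _ _) _; apply: (Rmult_le_reg_r c) => //; nra.
Qed.

Lemma beta2_rate_lower b : N <= b -> P <= b ->
  (8 * (N + P) < beta2_min N P -> beta2_min N P <= 144 * b) -> beta2_rate N P <= 162 * b.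
Proof.
rewrite /beta2_rate => le_N le_P large.
case: (Rlt_le_dec (8 * (N + P)) (beta2_min N P)) => [/large|]; lra.
Qed.

End Rates.

Local Close Scope R_scope.

Lemma INR_leq m n : m <= n -> (INR m <= INR n)%R.
Proof. by move/leP; apply: le_INR. Qed.

Lemma INR_ltn m n : m < n -> (INR m < INR n)%R.
Proof. by move/ltP; apply: lt_INR. Qed.

Lemma ltn_INR m n : (INR m < INR n)%R -> m < n.
Proof. by move/INR_lt/ltP. Qed.

Lemma INR_muln m n : INR (m * n) = (INR m * INR n)%R.
Proof. exact: mult_INR. Qed.

Lemma INR_subn_ge m n : (INR m - INR n <= INR (m - n))%R.
Proof.
case: (leqP n m) => [le_nm|/ltnW lt_mn]; last first.
  by have := INR_leq lt_mn; have := pos_INR (m - n); lra.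
by rewrite minus_INR; [lra | apply/leP].
Qed.

Lemma achievable_one_path n p : 0 < p -> achievable n p 2 n.
Proof.
move=> p_gt0; have le_1p : #|'I_1| <= p by rewrite card_ord.
have := achievable_relabel (s := fun _ : 'I_1 => enum 'I_n) (leqnn #|'I_n|) le_1p.
rewrite big_ord1 size_enum_ord card_ord; apply=> [_|i j x y _ _]; first exact: enum_uniq.
by rewrite !ord1.
Qed.

Lemma achievable_trivial_paths n p : 0 < n -> achievable n p 2 p.
Proof.
move=> n_gt0; have le_1n : #|'I_1| <= n by rewrite card_ord.
have := achievable_relabel (s := fun _ : 'I_p => [:: ord0 : 'I_1]) le_1n (leqnn #|'I_p|).
rewrite sum_nat_const !card_ord muln1; apply=> // i j x y /and3P[_ _].
by rewrite !ord1 ltnn.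
Qed.

Lemma beta2_upper n p : 0 < n -> 0 < p ->
  (INR (beta n p 2) <= 2 * beta2_rate (INR n) (INR p))%R.
Proof.
move=> /INR_ltn n_gt0 /INR_ltn p_gt0.
have [P [P_uniq /bridge_girth_gt2P P_pairs <-]] := beta_achievable n p 2.
have le_sq := INR_leq (psize_sq_le P_uniq P_pairs).
have le_cube := INR_leq (psize_cube_le P_uniq P_pairs).
have le_sub := INR_subn_ge (psize P) (2 * n).
rewrite !expnS !expn0 !muln1 in le_sq le_cube.
rewrite !(INR_muln, plus_INR) (INR_IZR_INZ 2) in le_sq le_cube le_sub; simpl Z.of_nat in *.
apply: (beta2_rate_upper (e := INR (psize P - 2 * n)) n_gt0 p_gt0 (pos_INR _)); lra.
Qed.

Lemma beta2_lower n p : 0 < n -> 0 < p ->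
  (beta2_rate (INR n) (INR p) <= 162 * INR (beta n p 2))%R.
Proof.
move=> n_gt0 p_gt0; have N_gt0 := INR_ltn n_gt0; have P_gt0 := INR_ltn p_gt0.
apply: beta2_rate_lower => //.
- exact/INR_leq/beta_max/achievable_one_path.
- exact/INR_leq/beta_max/achievable_trivial_paths.
move=> /(beta2_min_large N_gt0 P_gt0)[P_gt N_gt P_cube].
have p_ge : 64 <= p by apply/ltnW/ltn_INR; rewrite (INR_IZR_INZ 64).
have n_ge : 64 * p <= n * n.
  by apply/ltnW/ltn_INR; rewrite !INR_muln (INR_IZR_INZ 64).
have p_cube : 512 * n <= p * p * p.
  by apply/ltnW/ltn_INR; rewrite !INR_muln (INR_IZR_INZ 512).
have [s [q [/INR_leq le_s /INR_ltn lt_np q_small]]] := beta2_large_witness p_ge n_ge p_cube.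
apply: (Rle_trans _ (144 * INR s)); last by lra.
apply: beta2_min_le_of_mul (pos_INR _) (pos_INR q) _ _ => //.
  by move: lt_np; rewrite !INR_muln (INR_IZR_INZ 24).
case: q_small => /INR_leq; rewrite !INR_muln ?(INR_IZR_INZ 36) ?(INR_IZR_INZ 216).
  by left.
by right.
Qed.

Theorem theorem3p1 :
  exists c1 c2 : R, (0 < c1)%R /\ (0 < c2)%R /\
  forall n p : nat, (0 < n)%N -> (0 < p)%N ->
    beta n p 2 = beta_star n p 2 /\
    let F := (Rmin (INR n * sqrt (INR p)) (Rpower (INR n) (2/3) * INR p)
              + INR n + INR p)%R in
    (c1 * F <= INR (beta n p 2) <= c2 * F)%R.
Proof.
exists (1/162)%R, 2%R; split; first lra; split; first lra.
move=> n p n_gt0 p_gt0; split; first by rewrite beta_star2.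
have := beta2_lower n_gt0 p_gt0; have := beta2_upper n_gt0 p_gt0.
rewrite /beta2_rate /beta2_min /= => upper lower; split; lra.
Qed.
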